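(* Let $f$ and $h$ be the sequences defined in the context, and let $\varphi=(1+\sqrt5)/2$. Then: (a) $h$ is nondecreasing on $\mathbb{N}$. (b) $h(n)\le n$ for all $n\ge 0$. (c) $h(n+1)\in\{h(n),h(n)+1\}$ for all $n\ge 0$. (d) For all $n\ge 0$: $h(n+1)=h(n)$ if and only if $f(n+1)=h(n)$. (e) For all $n\ge 0$: $h(n+1)=h(n)+1$ if and only if $f(n+1)=h(n)+n+1$. (f) For all $n\ge 1$: $h(h(n))+h(n+1)=n+2$. (g) For all $n\ge 0$: $f(f(n))=n$. (h) For all $n\ge 1$: $h(h(n)+n)=n+1$. (i) For all $n\ge 1$: $h(n)=\lfloor n\varphi\rfloor-n+1$. (j) There are no three distinct integers $n_1<n_2<n_3$ in $\mathbb{N}$ with $h(n_1)=h(n_2)=h(n_3)$. (k) For all $n\ge 0$: $h(n+2)>h(n)$. (l) $h:\mathbb{N}\to\mathbb{N}$ is surjective. (m) $f:\mathbb{N}\to\mathbb{N}$ is surjective. (n) $f$ is injective. (o) For all $n\ge 6$: $h(n)\le n-2$. (p) For all $n\ge 0$: if $f(n+1)>h(n)$, then $f(j)>h(n)$ for every $j\ge n+1$. (q) There are no integers $k\ge 2$ and $\ell$ such that $f(k-1)=\ell$ and $f(k)=\ell+1$.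
   Context: $\mathbb{N}=\{0,1,2,\dots\}$. The sequence $f:\mathbb{N}\to\mathbb{N}$ is defined greedily: $f(0)=0$, and for $n\ge1$, $f(n)$ is the least natural number such that (i) $f(n)\notin\{f(0),f(1),\dots,f(n-1)\}$ and (ii) $\sum_{1\le i\le n} f(i)$ is divisible by $n$. The sequence $h:\mathbb{N}\to\mathbb{N}$ is defined by $h(0)=0$ and $h(n)=\frac1n\,(f(1)+\cdots+f(n))$ for $n\ge1$ (an integer by (ii)). The first values are $f=0,1,3,2,6,8,4,11,5,14,16,\dots$ and $h=0,1,2,2,3,4,4,5,5,6,7,\dots$. *)

From mathcomp Require Import all_boot.
From Stdlib Require Import Reals ZArith.

Set Implicit Arguments.
Unset Strict Implicit.
Unset Printing Implicit Defensive.

(* Greedy step.  [s] is the list [f 0; ...; f (n-1)], n >= 1.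
   [greedy_ok s n m] : m is not among f 0..f (n-1) and n divides
   f 1 + ... + f (n-1) + m. *)
Definition greedy_ok (s : seq nat) (n m : nat) : bool :=
  (m \notin s) && (n %| sumn (behead s) + m).

(* The search range [0, n*n + 2*n + 1) is
   sufficient: among the n+1 numbers r, r+n, ..., r+n*n (r < n the required
   residue), all satisfy the divisibility and at most n are in s, so one is
   free; hence the least valid m is < n*n + 2*n.  Since the search starts at 0,
   the first valid element found is the least natural number satisfying (i),(ii). *)
Definition greedy_next (s : seq nat) (n : nat) : nat :=
  nth 0 [seq m <- iota 0 (n * n + 2 * n + 1) | greedy_ok s n m] 0.

Fixpoint fseq (n : nat) : seq nat :=
  match n with
  | 0 => [:: 0]
  | n'.+1 => let s := fseq n' in rcons s (greedy_next s n'.+1)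
  end.

Definition f (n : nat) : nat := nth 0 (fseq n) n.

Definition h (n : nat) : nat :=
  if n == 0 then 0 else (\sum_(1 <= i < n.+1) f i) %/ n.

Definition phi : R := ((1 + sqrt 5) / 2)%R.

(* Write alpha = phi - 1 = 1/phi and G n = floor (n alpha), so that
   floor (n phi) = n + G n.  The proof has three parts.

   Using alpha^2 = 1 - alpha and the
      irrationality of alpha, we compute G at points such as
      floor (n phi) + 1, and characterise the "rises" of G (the n with
      G (n + 1) = G n + 1) among its "stays" (G (n + 1) = G n).
   2. The greedy recursion.  By induction, S n = f 1 + ... + f n = n h n,
      h n <= n and f i <= h n + n for i <= n.  Hence f (n + 1) is h n when
      that value is still free and h n + n + 1 otherwise, while h (n + 1)
      is h n or h n + 1 accordingly ([f_succ], [h_succ]).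
   3. Identification.  By strong induction, h n = G n + 1 for n > 0: the
      value h n is already used exactly at the rises of G ([seen_iff_rise]). *)
From Pilot Require Import Defs.
From mathcomp Require Import all_boot.
From Stdlib Require Import Reals ZArith Lra Lia.
From mathcomp Require Import zify.
Import Pilot.Defs.

Set Implicit Arguments.
Unset Strict Implicit.
Unset Printing Implicit Defensive.

Definition alpha : R := (phi - 1)%R.

Lemma alpha_sq : (alpha * alpha = 1 - alpha)%R.
Proof.
have s5 : (sqrt 5 * sqrt 5 = 5)%R by apply: sqrt_sqrt; lra.
rewrite /alpha /phi; lra.
Qed.

Lemma alpha_bounds : (0.6 < alpha < 0.625)%R.
Proof.
have s5 : (sqrt 5 * sqrt 5 = 5)%R by apply: sqrt_sqrt; lra.
have := sqrt_pos 5; rewrite /alpha /phi => ?; nra.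
Qed.

(* Multiplying out alpha^2, the form in which lra uses [alpha_sq]. *)
Lemma mul_alpha2 x : (x * alpha * alpha = x - x * alpha)%R.
Proof. by rewrite Rmult_assoc alpha_sq; ring. Qed.

(* 5 is not the square of a rational: compare the 5-adic valuations. *)
Lemma five_not_square k m : 0 < k -> 5 * (k * k) <> m * m.
Proof.
move=> k0 E.
have m0 : 0 < m by case: m E; rewrite ?muln0 //; lia.
have := congr1 (logn 5) E.
rewrite !lognM //; last by lia.
have -> : logn 5 5 = 1 by [].
lia.
Qed.

Lemma alpha_irrational g k : 0 < k -> (INR k * alpha <> INR g)%R.
Proof.
move=> k0 E.
have s5 : (sqrt 5 * sqrt 5 = 5)%R by apply: sqrt_sqrt; lra.
have E1 : (INR k * sqrt 5 = INR (g + g + k))%R.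
  by rewrite !plus_INR; move: E; rewrite /alpha /phi; lra.
apply: (@five_not_square k (g + g + k) k0); apply: INR_eq.
rewrite !mult_INR -E1 /=; nra.
Qed.

(* The positive factors alpha, 1 + alpha and 1 - alpha preserve inequalities;
   these products are the nonlinear facts the interval computations below need. *)
Lemma scale_lt u v : (u < v)%R ->
  [/\ u * alpha < v * alpha, u * (1 + alpha) < v * (1 + alpha)
    & u * (1 - alpha) < v * (1 - alpha)]%R.
Proof. by have := alpha_bounds => ? ?; split; apply: Rmult_lt_compat_r; lra. Qed.

Lemma scale_le u v : (u <= v)%R ->
  [/\ u * alpha <= v * alpha, u * (1 + alpha) <= v * (1 + alpha)
    & u * (1 - alpha) <= v * (1 - alpha)]%R.
Proof. by have := alpha_bounds => ? ?; split; apply: Rmult_le_compat_r; lra. Qed.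

Ltac scale H := first [ have [? ? ?] := scale_lt H | have [? ? ?] := scale_le H ].

Definition G (n : nat) : nat := Z.to_nat (Int_part (INR n * alpha)).

Lemma G_spec n : (INR (G n) <= INR n * alpha < INR (G n) + 1)%R.
Proof.
have [H1 H2] := base_Int_part (INR n * alpha).
have p : (0 <= INR n * alpha)%R by have := pos_INR n; have := alpha_bounds; nra.
have z0 : (0 <= Int_part (INR n * alpha))%Z.
  suff : (-1 < Int_part (INR n * alpha))%Z by lia.
  by apply: lt_IZR; rewrite /=; lra.
rewrite /G INR_IZR_INZ Z2Nat.id //; lra.
Qed.

Lemma INR_lt_succ a b : (INR a < INR b + 1)%R -> a <= b.
Proof. by rewrite -S_INR => /INR_lt /ltP. Qed.

Lemma G_unique n g : (INR g <= INR n * alpha < INR g + 1)%R -> G n = g.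
Proof.
move=> [g1 g2]; have [s1 s2] := G_spec n.
have : G n <= g by apply: INR_lt_succ; lra.
have : g <= G n by apply: INR_lt_succ; lra.
lia.
Qed.

(* By irrationality the lower bound of [G_spec] is strict for n > 0. *)
Lemma G_strict n : 0 < n -> (INR (G n) < INR n * alpha)%R.
Proof.
move=> n0; have [s1 _] := G_spec n.
case: (Rle_lt_or_eq_dec _ _ s1) => // E.
by case: (@alpha_irrational (G n) n n0).
Qed.

Lemma G_small : [/\ G 0 = 0, G 1 = 0, G 2 = 1 & G 3 = 1].
Proof. by have := alpha_bounds; split; apply: G_unique; rewrite /=; lra. Qed.

Lemma G_mono m n : m <= n -> G m <= G n.
Proof.
move=> /leP /le_INR le; have [? ?] := G_spec m; have [? ?] := G_spec n.
by scale le; apply: INR_lt_succ; lra.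
Qed.

Lemma G_succ n : G n.+1 = G n \/ G n.+1 = (G n).+1.
Proof.
have [? ?] := G_spec n; have [l1 u1] := G_spec n.+1; have := alpha_bounds => ?.
rewrite S_INR in l1 u1.
have : G n <= G n.+1 by apply: G_mono.
have : G n.+1 <= (G n).+1 by apply: INR_lt_succ; rewrite S_INR; lra.
lia.
Qed.

Lemma G_succ2 n : G n < G n.+2.
Proof.
have [? ?] := G_spec n; have [l2 u2] := G_spec n.+2; have := alpha_bounds => ?.
rewrite !S_INR in l2 u2; apply: INR_lt_succ; rewrite S_INR; lra.
Qed.

Lemma G_lt n : 0 < n -> G n < n.
Proof.
move=> n0; have := G_strict n0; have := lt_INR 0 n (elimT ltP n0).
have := alpha_bounds => ? /= ? ?.
by apply: INR_lt_succ; rewrite S_INR; nra.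
Qed.

Lemma G_le_sub3 n : 6 <= n -> G n + 3 <= n.
Proof.
move=> /leP /le_INR le; have [? ?] := G_spec n; have := alpha_bounds => ?.
by apply: INR_lt_succ; rewrite plus_INR; move: le; rewrite /= => ?; nra.
Qed.

Lemma Int_part_phi n : Int_part (INR n * phi) = Z.of_nat (n + G n).
Proof.
rewrite /Int_part; suff -> : up (INR n * phi) = (Z.of_nat (n + G n) + 1)%Z by lia.
have [l u] := G_spec n; rewrite /alpha in l u.
by symmetry; apply: tech_up; rewrite plus_IZR -INR_IZR_INZ plus_INR; lra.
Qed.

Lemma G_wythoff n : G (G n + n + 1) = n.
Proof.
have [F1 F2] := G_spec n; set g := G n in F1 F2 *.
scale F1; scale F2; have := mul_alpha2 (INR n); have := mul_alpha2 (INR g).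
have := alpha_bounds => ? ? ?.
by apply: G_unique; rewrite !plus_INR /=; lra.
Qed.

Lemma G_wythoff_rise n : G n.+1 = (G n).+1 -> G (G n + n + 2) = n.
Proof.
move=> E; have [F1 F2] := G_spec n; have F3 := @G_strict n.+1 isT.
rewrite E !S_INR in F3; set g := G n in F1 F2 F3 *.
scale F1; scale F2; scale F3; have := mul_alpha2 (INR n); have := mul_alpha2 (INR g).
have := alpha_sq; have := alpha_bounds => ? ? ? ?.
by apply: G_unique; rewrite !plus_INR /=; lra.
Qed.

Lemma G_stay n : 0 < n -> G n.+1 = G n ->
  G (G n).+1 = (G (G n)).+1 /\ G (G n) + G n + 1 = n.
Proof.
move=> n0 E; have F1 := G_strict n0; have [_ F2] := G_spec n.+1.
rewrite E S_INR in F2; set j := G n in F1 F2 E *.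
have [F3 F4] := G_spec j; set m := G j in F3 F4 *; clearbody m j.
scale F1; scale F2; scale F3; scale F4.
have := mul_alpha2 (INR n); have := mul_alpha2 (INR j); have := mul_alpha2 (INR m).
have := alpha_sq; have := alpha_bounds => ? ? ? ? ?.
have En : m + j + 1 = n.
  have : m + j + 1 <= n by apply: INR_lt_succ; rewrite !plus_INR /=; lra.
  have : n <= m + j + 1 by apply: INR_lt_succ; rewrite !plus_INR /=; lra.
  lia.
split=> //; apply: G_unique; rewrite !S_INR.
have : INR n = (INR m + INR j + 1)%R by rewrite -En !plus_INR.
lra.
Qed.

Lemma G_sum n : 0 < n -> G (G n + 1) + G n.+1 = n.
Proof.
move=> n0; have y_le : G n.+1 <= n by have := G_lt n0; have := G_succ n; lia.
suff : G (G n + 1) = n - G n.+1 by lia.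
have F1 := G_strict n0; have [_ F2] := G_spec n.
have F3 := @G_strict n.+1 isT; have [_ F4] := G_spec n.+1.
rewrite S_INR in F3 F4; have Ey := G_succ n.
set g := G n in F1 F2 Ey *; set y := G n.+1 in F3 F4 y_le Ey *; clearbody g y.
apply: G_unique; rewrite minus_INR; last by apply/leP.
scale F1; scale F2; have := mul_alpha2 (INR n); have := mul_alpha2 (INR g).
have := alpha_sq; have := alpha_bounds => ? ? ? ?.
by case: Ey => Ey; subst y; rewrite ?S_INR plus_INR /= in F3 F4 *;
  scale F3; scale F4; lra.
Qed.

Lemma G_after_rise k : 0 < k -> G k.+1 = (G k).+1 ->
  G (G k + k + k + 1) = G k + k /\ G (G k + k + k + 3) = G k + k + 2.
Proof.
move=> k0 E; have F1 := G_strict k0; have [_ F2] := G_spec k.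
have F3 := @G_strict k.+1 isT; have [_ F4] := G_spec k.+1.
rewrite E !S_INR in F3 F4; set m := G k in F1 F2 F3 F4 *.
scale F1; scale F2; scale F3; scale F4.
have := mul_alpha2 (INR k); have := mul_alpha2 (INR m).
have := alpha_sq; have := alpha_bounds => ? ? ? ?.
by split; apply: G_unique; rewrite !plus_INR /=; lra.
Qed.

Lemma G_double_rise n : 2 <= n -> G n.+1 = (G n).+1 -> G n.+2 = (G n.+1).+1 ->
  exists2 k, 0 < k & G k.+1 = (G k).+1 /\ G k + k + 1 = G n.+1.
Proof.
move=> n2 e1 e2; set g := G n.+1 in e1 e2 *.
have F1 : (INR n * alpha < INR g)%R by rewrite e1 S_INR; exact: (G_spec n).2.
have F2 := @G_strict n.+1 isT; have F3 := @G_strict n.+2 isT.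
rewrite -/g in F2; rewrite e2 in F3; rewrite !S_INR in F1 F2 F3.
have := alpha_bounds => bnd.
have g_le : g.+2 <= n.+1.
  have := le_INR 2 n (elimT leP n2) => /= ?.
  have ? : ((INR n + 1) * alpha <= (INR n + 1) * 0.625)%R.
    by apply: Rmult_le_compat_l; [have := pos_INR n|]; lra.
  by apply: INR_lt_succ; rewrite !S_INR; lra.
have g_ge : n.+1 <= g + g.
  have ? : (INR n * 0.6 <= INR n * alpha)%R.
    by apply: Rmult_le_compat_l; [have := pos_INR n|]; lra.
  by have := pos_INR n => ?; apply: INR_lt_succ; rewrite plus_INR S_INR; lra.
exists (n.+1 - g - 1); first by lia.
have Ek : n.+1 = (n.+1 - g - 1) + g + 1 by lia.
have Em : g + g = (g + g - n.+1) + n.+1 by lia.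
set k := n.+1 - g - 1 in Ek *; set m := g + g - n.+1 in Em.
have R1 : INR n.+1 = (INR k + INR g + 1)%R by rewrite Ek !plus_INR.
have R2 : INR (g + g) = INR (m + n.+1) by rewrite Em.
rewrite !plus_INR S_INR in R2; rewrite S_INR in R1.
have R1a := f_equal (Rmult^~ alpha) R1; have R2a := f_equal (Rmult^~ alpha) R2.
rewrite /= in R1a R2a.
scale F1; scale F2; scale F3.
have := mul_alpha2 (INR k); have := mul_alpha2 (INR g); have := mul_alpha2 (INR m).
have := mul_alpha2 (INR n); have := alpha_sq => ? ? ? ? ?.
have Gk : G k = m by apply: G_unique; lra.
have Gk1 : G k.+1 = m.+1 by apply: G_unique; rewrite !S_INR; lra.
by split; lia.
Qed.

Lemma G_rise_iff n : 2 <= n -> G n.+1 = (G n).+1 <->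
  G n = G n.-1 \/ exists2 j, 0 < j & G j.+1 = (G j).+1 /\ G j + j + 1 = G n.
Proof.
case: n => [//|n] n2 /=; split.
- move=> rise_n1; case: (G_succ n) => [stay_n|rise_n]; first by left.
  have n2' : 2 <= n.
    by case: n n2 rise_n1 {rise_n} => [|[|n]] //; have [_ _ -> ->] := G_small.
  by right; apply: G_double_rise rise_n rise_n1.
- case=> [stay_n | [j j0 [rise_j Ej]]].
    by have := G_succ2 n; have := G_succ n.+1; lia.
  have [A C] := G_after_rise j0 rise_j.
  have En : n.+1 = G j + j + j + 2.
    case: (ltngtP n.+1 (G j + j + j + 2)) => // cmp.
    - by have := @G_mono n.+1 (G j + j + j + 1) ltac:(lia); lia.
    - by have := @G_mono (G j + j + j + 3) n.+1 ltac:(lia); lia.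
  by rewrite -Ej (_ : n.+2 = G j + j + j + 3) ?C //; lia.
Qed.

Definition S (n : nat) : nat := \sum_(1 <= i < n.+1) f i.

Lemma S_succ n : S n.+1 = S n + f n.+1.
Proof. by rewrite /S big_nat_recr. Qed.

Lemma size_fseq n : size (fseq n) = n.+1.
Proof. by elim: n => //= n IH; rewrite size_rcons IH. Qed.

Lemma fseqE n : fseq n = mkseq f n.+1.
Proof.
have nth_fseq i : i <= n -> nth 0 (fseq n) i = f i.
  elim: n i => [|n IH] i; first by rewrite leqn0 => /eqP ->.
  rewrite leq_eqVlt => /orP [/eqP -> //|lt].
  by rewrite /= nth_rcons size_fseq lt IH.
apply: (@eq_from_nth _ 0); first by rewrite size_fseq size_mkseq.
by move=> i; rewrite size_fseq => lt; rewrite nth_mkseq // nth_fseq.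
Qed.

Lemma f_greedy n : f n.+1 = greedy_next (mkseq f n.+1) n.+1.
Proof. by rewrite /f /= nth_rcons size_fseq ltnn eqxx fseqE. Qed.

Lemma sumn_mkseq n : sumn (behead (mkseq f n.+1)) = S n.
Proof. by rewrite /mkseq /S /= sumnE big_map /index_iota subSS subn0. Qed.

Lemma mem_mkseq_f v n : reflect (exists2 i, i <= n & f i = v) (v \in mkseq f n.+1).
Proof.
apply: (iffP mapP) => [[i]|[i ii <-]].
  by rewrite mem_iota add0n => /andP [_ ii] ->; exists i.
by exists i => //; rewrite mem_iota add0n.
Qed.

Lemma greedy_nextP s n m : m < n * n + 2 * n + 1 -> greedy_ok s n m ->
  (forall k, k < m -> ~~ greedy_ok s n k) -> greedy_next s n = m.
Proof.
move=> m_lt ok least; rewrite /greedy_next.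
rewrite -(subnKC (ltnW m_lt)) iotaD filter_cat add0n.
have -> : [seq x <- iota 0 m | greedy_ok s n x] = [::].
  rewrite (@eq_in_filter _ _ pred0) ?filter_pred0 //.
  by move=> x; rewrite mem_iota add0n /= => /least /negbTE.
by rewrite (_ : _ - m = (n * n + 2 * n - m).+1) /= ?ok //; lia.
Qed.

Lemma unique_residue n c m : c <= n -> n.+1 %| n * c + m -> m < c + n.+1 -> m = c.
Proof.
move=> cn /dvdnP [q E] lt.
have : q <= c by nia.
have : c <= q by nia.
nia.
Qed.

Definition seen (n : nat) : bool := h n \in mkseq f n.+1.

Lemma f_step n : S n = n * h n -> h n <= n -> (forall i, i <= n -> f i <= h n + n) ->
  f n.+1 = if seen n then h n + n.+1 else h n.
Proof.
move=> Sn hn fb; rewrite f_greedy /seen.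
have okE m : greedy_ok (mkseq f n.+1) n.+1 m
    = (m \notin mkseq f n.+1) && (n.+1 %| n * h n + m).
  by rewrite /greedy_ok sumn_mkseq Sn.
case: ifP => hin; apply: greedy_nextP; try nia.
- rewrite okE; apply/andP; split.
    by apply/negP => /mem_mkseq_f [i /fb]; lia.
  by rewrite (_ : _ + _ = n.+1 * (h n).+1) ?dvdn_mulr //; nia.
- move=> k lt; rewrite okE; apply/negP => /andP [kn dv].
  by move: kn; rewrite (unique_residue hn dv lt) hin.
- by rewrite okE hin /= (_ : _ + _ = n.+1 * h n) ?dvdn_mulr //; nia.
- move=> k lt; rewrite okE; apply/negP => /andP [_ dv].
  by have := unique_residue hn dv (ltn_addr _ lt); lia.
Qed.

Lemma h_step n : S n = n * h n -> f n.+1 = (if seen n then h n + n.+1 else h n) ->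
  h n.+1 = h n + seen n.
Proof.
move=> Sn fn; rewrite {1}/h /= -/(S n.+1) S_succ Sn fn.
case: (seen n).
- by rewrite (_ : _ + _ = (h n).+1 * n.+1) ?mulnK //; nia.
- by rewrite (_ : _ + _ = h n * n.+1) ?mulnK ?addn0 //; nia.
Qed.

Lemma greedy_invariant n :
  [/\ S n = n * h n, h n <= n & forall i, i <= n -> f i <= h n + n].
Proof.
elim: n => [|n [Sn hn fb]].
  by split=> // [|i]; [rewrite /S big_geq | rewrite leqn0 => /eqP ->].
have fn := f_step Sn hn fb; have hn1 := h_step Sn fn.
split.
- by rewrite S_succ Sn fn hn1; case: (seen n) => /=; nia.
- by rewrite hn1; case: (seen n) => /=; lia.
- move=> i; rewrite leq_eqVlt => /orP [/eqP ->|].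
    by rewrite fn hn1; case: (seen n) => /=; lia.
  by rewrite ltnS => /fb; rewrite hn1; lia.
Qed.

Lemma f_succ n : f n.+1 = if seen n then h n + n.+1 else h n.
Proof. by have [] := greedy_invariant n; exact: f_step. Qed.

Lemma h_succ n : h n.+1 = h n + seen n.
Proof. by have [Sn _ _] := greedy_invariant n; exact: h_step Sn (f_succ n). Qed.

Lemma h_le n : h n <= n.
Proof. by have [] := greedy_invariant n. Qed.

Lemma seenP n : reflect (exists2 i, i <= n & f i = h n) (seen n).
Proof. exact: mem_mkseq_f. Qed.

Lemma seen0 : seen 0.
Proof. by apply/seenP; exists 0. Qed.

Lemma h1 : h 1 = 1.
Proof. by rewrite h_succ seen0. Qed.

Lemma f1 : f 1 = 1.
Proof. by rewrite f_succ seen0. Qed.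

Lemma seen_iff_rise n : 0 < n -> (forall j, 0 < j <= n -> h j = (G j).+1) ->
  seen n <-> G n.+1 = (G n).+1.
Proof.
have [_ G1 G2 _] := G_small.
case: n => [//|[_ _|m _ IH]].
  by rewrite G1 G2; split=> // _; apply/seenP; exists 1; rewrite ?f1 ?h1.
have seenG j : 0 < j <= m.+1 -> seen j <-> G j.+1 = (G j).+1.
  by move=> jm; move: (h_succ j); rewrite !IH; lia.
have hn : h m.+2 = (G m.+2).+1 by apply: IH; rewrite leqnn.
rewrite G_rise_iff //=; split.
- case/seenP => [[|[|j]] j_le]; rewrite hn //.
  + by rewrite f1; have := @G_mono 2 m.+2 isT; lia.
  rewrite f_succ; case sj : (seen j.+1) => fE.
  + right; exists j.+1 => //; split; first by apply/seenG; rewrite ?sj; lia.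
    by move: fE; rewrite IH; lia.
  + have stay : G j.+2 = G j.+1 by have := seenG j.+1; rewrite sj; have := G_succ j.+1; lia.
    have Gj : G j.+1 = G m.+2 by move: fE; rewrite IH; lia.
    have jm : j = m.
      case: (ltngtP j m) => // [jm|]; last by lia.
      by have := G_succ2 j.+1; have := @G_mono j.+3 m.+2 jm; lia.
    by left; subst j.
- case=> [stay | [j j0 [rise_j Ej]]]; apply/seenP.
  + exists m.+2 => //; have := seenG m.+1; have := h_succ m.+1.
    by rewrite f_succ !IH //; case: (seen m.+1) => /=; lia.
  + have jm : j < m.+1 by have := @G_lt m.+2 isT; lia.
    have sj : seen j by apply/seenG; rewrite ?rise_j; lia.
    exists j.+1; first by lia.
    by rewrite f_succ sj hn IH; lia.
Qed.

Lemma h_G n : 0 < n -> h n = (G n).+1.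
Proof.
have upto N : forall k, 0 < k <= N -> h k = (G k).+1.
  elim: N => [|N IH] k; first by lia.
  case/andP=> k0; rewrite leq_eqVlt => /orP [/eqP ->|]; last by move=> ?; apply: IH; lia.
  case: N IH {k0} => [|N] IH; first by have [_ -> _ _] := G_small; rewrite h1.
  have := @seen_iff_rise N.+1 isT IH; rewrite h_succ IH ?leqnn //.
  by case: (seen N.+1); case: (G_succ N.+1) => ->; lia.
by move=> n0; apply: (upto n); lia.
Qed.

Lemma f_G n : 0 < n ->
  f n.+1 = if G n.+1 == (G n).+1 then G n + n + 2 else (G n).+1.
Proof.
move=> n0; have := h_succ n; rewrite f_succ !h_G //.
by case: (seen n) => /=; case: eqP; lia.
Qed.

Lemma f_involutive n : f (f n) = n.
Proof.
case: n => [//|n]; case: (posnP n) => [->|n0]; first by rewrite f1.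
rewrite (f_G n0); case: eqP => [rise|not_rise].
- have GN := G_wythoff n; have GN1 := G_wythoff_rise rise.
  rewrite (_ : G n + n + 2 = (G n + n + 1).+1) ?f_G; try lia.
  by rewrite GN (_ : (G n + n + 1).+1 = G n + n + 2) ?GN1; [case: eqP; lia | lia].
- have stay : G n.+1 = G n by case: (G_succ n).
  have [rise_j Ej] := G_stay n0 stay.
  have j0 : 0 < G n.
    case: (posnP (G n)) => // Gn0; have [G0 G1 G2 _] := G_small.
    have n1 : n = 1 by move: Ej; rewrite Gn0 G0; lia.
    by move: stay; rewrite n1 G1 G2.
  by rewrite f_G // rise_j eqxx; lia.
Qed.

Lemma f_injective : injective f.
Proof. by move=> a b E; rewrite -(f_involutive a) E f_involutive. Qed.

Lemma f_surjective m : exists n, f n = m.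
Proof. by exists (f m); rewrite f_involutive. Qed.

Lemma h_succ_cases n : h n.+1 = h n \/ h n.+1 = (h n).+1.
Proof. by rewrite h_succ; case: (seen n) => /=; lia. Qed.

Lemma h_stay_iff n : h n.+1 = h n <-> f n.+1 = h n.
Proof. by rewrite f_succ h_succ; case: (seen n) => /=; lia. Qed.

Lemma h_rise_iff n : h n.+1 = (h n).+1 <-> f n.+1 = h n + n.+1.
Proof. by rewrite f_succ h_succ; case: (seen n) => /=; lia. Qed.

Lemma h_mono m n : m <= n -> h m <= h n.
Proof.
move=> mn; rewrite -(subnKC mn); elim: (n - m) => [|k IH]; first by rewrite addn0.
by rewrite addnS h_succ; lia.
Qed.

(* (k): h never stays twice in a row: after a stay, f (n + 1) = h (n + 1)
   has just been used. *)
Lemma seen_after_stay n : ~~ seen n -> seen n.+1.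
Proof.
move=> /negbTE ns; apply/seenP; exists n.+1 => //.
by rewrite f_succ ns h_succ ns addn0.
Qed.

Lemma h_succ2 n : h n < h n.+2.
Proof.
have := h_succ n; have := h_succ n.+1.
by case sn : (seen n); last rewrite seen_after_stay ?sn //; lia.
Qed.

Lemma h_no_triple :
  ~ (exists n1 n2 n3 : nat, n1 < n2 < n3 /\ h n1 = h n2 /\ h n2 = h n3).
Proof.
case=> n1 [n2 [n3 [/andP [lt12 lt23] [e12 e23]]]].
by have := h_succ2 n1; have := @h_mono n1.+2 n3 ltac:(lia); lia.
Qed.

(* (l): h starts at 0 and moves by steps 0 or 1, never staying twice. *)
Lemma h_surjective m : exists n, h n = m.
Proof.
elim: m => [|m [n hn]]; first by exists 0.
case: (h_succ_cases n) => e; last by exists n.+1; lia.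
by exists n.+2; have := h_succ2 n; have := h_succ_cases n.+1; lia.
Qed.

Lemma h_sum n : 1 <= n -> h (h n) + h n.+1 = n + 2.
Proof.
by move=> n0; have := G_sum n0; rewrite addn1 (h_G n0) !h_G //; lia.
Qed.

Lemma h_wythoff n : 1 <= n -> h (h n + n) = n.+1.
Proof.
move=> n0; rewrite (h_G n0) h_G; last by lia.
by rewrite (_ : (G n).+1 + n = G n + n + 1) ?G_wythoff //; lia.
Qed.

Lemma h_phi n : 1 <= n ->
  Z.of_nat (h n) = (Int_part (INR n * phi) - Z.of_nat n + 1)%Z.
Proof. by move=> n0; rewrite h_G // Int_part_phi; lia. Qed.

(* (o): since alpha < 5/8, h n <= n - 2 from n = 6 on. *)
Lemma h_le_sub2 n : 6 <= n -> h n <= n - 2.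
Proof. by move=> n6; rewrite h_G; have := G_le_sub3 n6; lia. Qed.

(* (p): once f exceeds h n, h n has been used, so every later value of f,
   being at least h n and different from it, stays above h n. *)
Lemma f_above n : h n < f n.+1 -> forall j, n.+1 <= j -> h n < f j.
Proof.
move=> lt j nj.
have /seenP [i i_le fi] : seen n by move: lt; rewrite f_succ; case: (seen n); lia.
case: j nj => [//|q] nq.
have ne : f q.+1 <> h n by move=> e; have := f_injective (etrans e (esym fi)); lia.
by have := @h_mono n q nq; move: ne; rewrite f_succ; case: (seen q); lia.
Qed.

(* (q): f never takes values l, l + 1 at consecutive positions k - 1, k;
   check the four combinations of the greedy steps at k - 2 and k - 1. *)
Lemma f_no_consecutive : ~ (exists k l : nat, 2 <= k /\ f k.-1 = l /\ f k = l.+1).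
Proof.
case=> k [l [k2 [e1 e2]]].
case: k k2 e1 e2 => [|[|n]] // _ /= e1 e2.
move: e1 e2; rewrite (f_succ n) (f_succ n.+1) (h_succ n).
by case: (seen n); case: (seen n.+1) => /=; lia.
Qed.

Theorem theorem2 :
  (* (a) *) (forall m n : nat, m <= n -> h m <= h n) /\
  (* (b) *) (forall n : nat, h n <= n) /\
  (* (c) *) (forall n : nat, h n.+1 = h n \/ h n.+1 = (h n).+1) /\
  (* (d) *) (forall n : nat, h n.+1 = h n <-> f n.+1 = h n) /\
  (* (e) *) (forall n : nat, h n.+1 = (h n).+1 <-> f n.+1 = h n + n.+1) /\
  (* (f) *) (forall n : nat, 1 <= n -> h (h n) + h n.+1 = n + 2) /\
  (* (g) *) (forall n : nat, f (f n) = n) /\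
  (* (h) *) (forall n : nat, 1 <= n -> h (h n + n) = n.+1) /\
  (* (i) *) (forall n : nat, 1 <= n ->
               Z.of_nat (h n) = (Int_part (INR n * phi) - Z.of_nat n + 1)%Z) /\
  (* (j) *) ~ (exists n1 n2 n3 : nat,
                 n1 < n2 < n3 /\ h n1 = h n2 /\ h n2 = h n3) /\
  (* (k) *) (forall n : nat, h n < h n.+2) /\
  (* (l) *) (forall m : nat, exists n : nat, h n = m) /\
  (* (m) *) (forall m : nat, exists n : nat, f n = m) /\
  (* (n) *) injective f /\
  (* (o) *) (forall n : nat, 6 <= n -> h n <= n - 2) /\
  (* (p) *) (forall n : nat, h n < f n.+1 -> forall j : nat, n.+1 <= j -> h n < f j) /\
  (* (q) *) ~ (exists k l : nat, 2 <= k /\ f k.-1 = l /\ f k = l.+1).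
Proof.
split; first exact: h_mono.
split; first exact: h_le.
split; first exact: h_succ_cases.
split; first exact: h_stay_iff.
split; first exact: h_rise_iff.
split; first exact: h_sum.
split; first exact: f_involutive.
split; first exact: h_wythoff.
split; first exact: h_phi.
split; first exact: h_no_triple.
split; first exact: h_succ2.
split; first exact: h_surjective.
split; first exact: f_surjective.
split; first exact: f_injective.
split; first exact: h_le_sub2.
split; first exact: f_above.
exact: f_no_consecutive.
Qed.
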